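(* If $G$ is a connected, claw-free cubic graph of order $n$, then $\sigma_{(3,q)}(G) = \beta(G)$ for every $q \in \mathbb{N}\cup\{\infty\}$ with $q\ge 2$.
   Context: A graph is claw-free if it has no induced subgraph isomorphic to $K_{1,3}$; it is cubic if every vertex has degree $3$. $\beta(G)$ denotes the vertex covering number (minimum size of a set of vertices meeting every edge). $(p,q)$-spreading: let $p\in\mathbb{N}$ and $q\in\mathbb{N}\cup\{\infty\}$. Start with a set $S\subseteq V(G)$ of blue vertices, all other vertices white. The color change rule: if a white vertex $w$ has at least $p$ blue neighbors, and at least one of the blue neighbors of $w$ has at most $q$ white neighbors, then $w$ is recolored blue. $S$ is a $(p,q)$-spreading set if repeatedly applying this rule eventually colors all vertices blue. $\sigma_{(p,q)}(G)$ is the minimum cardinality of a $(p,q)$-spreading set of $G$. *)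

(* A simple graph is a symmetric irreflexive relation e on a finType T. *)
From mathcomp Require Import all_boot.
Set Implicit Arguments. Unset Strict Implicit. Unset Printing Implicit Defensive.

Section Graphs.
Variables (T : finType) (e : rel T).

Definition nbhd (x : T) : {set T} := [set y | e x y].

Definition cubic : Prop := forall x : T, #|nbhd x| = 3.

Definition connected : Prop := forall x y : T, connect e x y.

Definition claw_free : Prop :=
  ~ exists x a b c : T,
      [/\ e x a, e x b, e x c,
          [&& a != b, a != c & b != c] &
          [&& ~~ e a b, ~~ e a c & ~~ e b c]].

Definition vertex_cover (S : {set T}) : bool :=
  [forall x, forall y, e x y ==> (x \in S) || (y \in S)].

(* vertex covering number beta(G) (setT is always a cover, so #|T| is a valid default) *)
Definition beta : nat := \big[minn/#|T|]_(S : {set T} | vertex_cover S) #|S|.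

(* q in N ∪ {∞}: None encodes ∞ *)
Definition qle (k : nat) (q : option nat) : bool :=
  if q is Some q' then k <= q' else true.

Definition can_color (p : nat) (q : option nat) (B : {set T}) (w : T) : bool :=
  [&& w \notin B,
      p <= #|[set u in B | e w u]| &
      [exists u in B, e w u && qle #|[set v | e u v & v \notin B]| q]].

(* apply the rule to all currently eligible white vertices; since the rule is
   monotone in B, this reaches the same final set as sequential application *)
Definition spread_step (p : nat) (q : option nat) (B : {set T}) : {set T} :=
  B :|: [set w | can_color p q B w].

Definition spread_closure (p : nat) (q : option nat) (S : {set T}) : {set T} :=
  iter #|T| (spread_step p q) S.

Definition spreading_set (p : nat) (q : option nat) (S : {set T}) : bool :=
  spread_closure p q S == setT.

(* sigma_(p,q)(G) (setT is always spreading) *)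
Definition sigma (p : nat) (q : option nat) : nat :=
  \big[minn/#|T|]_(S : {set T} | spreading_set p q S) #|S|.

End Graphs.

(* The (3,q)-spreading sets of a claw-free cubic graph are exactly its vertex
   covers.  If S is a cover, every white vertex has its three neighbours blue,
   and a blue vertex has at most two white neighbours, because the white
   vertices are independent and three of them around one vertex would form a
   claw; so S turns everything blue in a single step.  Conversely, if both ends
   of an edge are white, each end has at most two blue neighbours, so neither
   ever turns blue. *)
From mathcomp Require Import all_boot.

Set Implicit Arguments.
Unset Strict Implicit.
Unset Printing Implicit Defensive.

Section Spreading.
Variables (T : finType) (e : rel T).

Lemma vertex_coverP (S : {set T}) :
  reflect (forall x y, e x y -> (x \in S) || (y \in S)) (vertex_cover e S).
Proof.
apply: (iffP forallP) => [vc x y | vc x]; first exact/implyP/(forallP (vc x)).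
by apply/forallP => y; apply/implyP/vc.
Qed.

Lemma vertex_coverC_independent (S : {set T}) :
  vertex_cover e S -> {in ~: S &, forall x y, ~~ e x y}.
Proof.
move=> /vertex_coverP vc x y; rewrite !inE => xS yS; apply/negP => /vc.
by rewrite (negbTE xS) (negbTE yS).
Qed.

Lemma claw_free_independent_nbhd (A : {set T}) (u : T) :
  claw_free e -> {in A &, forall x y, ~~ e x y} -> #|[set v in A | e u v]| <= 2.
Proof.
move=> cf indA; rewrite leqNgt; apply/negP.
case/card_gt2P => a [b [c [[]]]]; rewrite !inE.
move=> /andP[aA ea] /andP[bA eb] /andP[cA ec] [ab bc ca].
apply: cf; exists u, a, b, c; split => //; first by rewrite ab bc eq_sym ca.
by rewrite !indA.
Qed.

Lemma spread_step_setT (p : nat) (q : option nat) :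
  spread_step e p q setT = setT.
Proof. by apply/setP => x; rewrite !inE. Qed.

Lemma spread_step_spreading (p : nat) (q : option nat) (S : {set T}) :
  spread_step e p q S = setT -> spreading_set e p q S.
Proof.
move=> stepS; rewrite /spreading_set /spread_closure.
case cardT: #|T| => [|n].
  by apply/eqP/setP => x; move: (max_card (pred1 x)); rewrite cardT card1.
rewrite iterSr stepS; apply/eqP.
by elim: n {cardT} => //= n ->; rewrite spread_step_setT.
Qed.

Section Sufficiency.
Hypotheses (Gcf : claw_free e) (Gcub : cubic e).
Variables (p : nat) (q : option nat).
Hypotheses (p_le3 : p <= 3) (q_ge2 : qle 2 q).

Lemma vertex_cover_spread_step (S : {set T}) :
  vertex_cover e S -> spread_step e p q S = setT.
Proof.
move=> vc; apply/setP => w; rewrite !inE /can_color.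
case wS: (w \in S) => //=.
have nbS u : e w u -> u \in S.
  by move/vertex_coverP: vc => /[apply]; rewrite wS.
have -> : [set u in S | e w u] = nbhd e w.
  by apply/setP => u; rewrite !inE; case ewu: (e w u); rewrite ?andbF ?nbS.
rewrite Gcub p_le3 /=.
have [u] : exists u, u \in nbhd e w by apply/card_gt0P; rewrite Gcub.
rewrite inE => ewu; apply/existsP; exists u; rewrite nbS //= ewu /=.
have white_nbrs : #|[set v | e u v & v \notin S]| <= 2.
  rewrite (eq_card (B := [set v in ~: S | e u v])) => [|v]; last first.
    by rewrite !inE andbC.
  exact/claw_free_independent_nbhd/vertex_coverC_independent.
by case: q q_ge2 => //= q' /(leq_trans white_nbrs).
Qed.

Lemma vertex_cover_spreading (S : {set T}) :
  vertex_cover e S -> spreading_set e p q S.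
Proof. by move/vertex_cover_spread_step/spread_step_spreading. Qed.

End Sufficiency.

Section Necessity.
Hypothesis e_sym : symmetric e.
Variables (p : nat) (q : option nat).
Hypothesis max_deg_le : forall w, #|nbhd e w| <= p.

Lemma can_colorN_white_nbr (B : {set T}) (w b : T) :
  e w b -> b \notin B -> ~~ can_color e p q B w.
Proof.
move=> ewb bB; apply/and3P => -[_ many_blue _].
have blue_nbrs : [set u in B | e w u] \subset nbhd e w :\ b.
  apply/subsetP => u; rewrite !inE => /andP[uB ->]; rewrite andbT.
  by apply: contraNneq bB => <-.
have := max_deg_le w; rewrite (cardsD1 b) inE ewb add1n => deg.
by have := leq_trans deg (leq_trans many_blue (subset_leq_card blue_nbrs)); rewrite ltnn.
Qed.

Lemma spread_step_white_edge (B : {set T}) (x y : T) :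
  e x y -> x \notin B -> y \notin B ->
  (x \notin spread_step e p q B) && (y \notin spread_step e p q B).
Proof.
move=> exy xB yB; rewrite !inE (negbTE xB) (negbTE yB) /=.
by rewrite (can_colorN_white_nbr exy) // (can_colorN_white_nbr _ xB) // e_sym.
Qed.

Lemma spreading_vertex_cover (S : {set T}) :
  spreading_set e p q S -> vertex_cover e S.
Proof.
move=> /eqP spS; apply/vertex_coverP => x y exy; apply/negPn/negP.
rewrite negb_or => white_xy.
have white_ever n : (x \notin iter n (spread_step e p q) S) &&
                    (y \notin iter n (spread_step e p q) S).
  by elim: n => //= n /andP[]; apply: spread_step_white_edge.
by case/andP: (white_ever #|T|); rewrite [iter _ _ _]spS inE.
Qed.

End Necessity.

End Spreading.

Theorem proposition3p8 (T : finType) (e : rel T)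
  (e_sym : symmetric e) (e_irr : irreflexive e)
  (Gconn : connected e) (Gcf : claw_free e) (Gcub : cubic e)
  (q : option nat) (hq : if q is Some q' then 2 <= q' else true) :
  sigma e 3 q = beta e.
Proof.
rewrite /sigma /beta; apply: eq_bigl => S; apply/idP/idP.
  by apply: spreading_vertex_cover => // w; rewrite Gcub.
exact: vertex_cover_spreading.
Qed.
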